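(* Every pair of different words $x,y$ over a finite alphabet can be separated exactly by a 2-state AfA.
   Context: An $n$-state affine finite automaton (AfA) over a finite alphabet $\Sigma$ consists of real $n\times n$ matrices $A_\sigma$ for $\sigma\in\Sigma\cup\{\$\}$ ($\$$ a right end-marker), each of whose columns sums to $1$; an initial vector $v_0\in\mathbb{R}^n$ with entries summing to $1$; and a set $E_a$ of accepting states. On input $w=w_1\cdots w_k$ the final vector is $v_f=A_\$A_{w_k}\cdots A_{w_1}v_0$, and $w$ is accepted with probability $\sum_{j\in E_a}|v_f[j]|\big/\sum_{j=1}^n|v_f[j]|$. A pair is separated exactly if one word is accepted with probability $1$ and the other with probability $0$. *)

From Stdlib Require Import Reals List.
Import ListNotations.
Open Scope R_scope.

Definition fsum (n : nat) (f : nat -> R) : R :=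
  fold_right Rplus 0 (map f (seq 0 n)).

(* States are indices 0..n-1; vectors are functions nat -> R (only entries
   below n matter); matrices are functions nat -> nat -> R (row, column).
   The end-marker matrix is [afa_end]. *)
Record AfA (Sigma : Type) (n : nat) := mkAfA {
  afa_trans : Sigma -> nat -> nat -> R;
  afa_end : nat -> nat -> R;
  afa_init : nat -> R;
  afa_acc : nat -> bool
}.
Arguments afa_trans {Sigma n}.
Arguments afa_end {Sigma n}.
Arguments afa_init {Sigma n}.
Arguments afa_acc {Sigma n}.

Definition col_sums_one (n : nat) (A : nat -> nat -> R) : Prop :=
  forall j, (j < n)%nat -> fsum n (fun i => A i j) = 1.

Definition AfA_wf {Sigma : Type} {n : nat} (M : AfA Sigma n) : Prop :=
  (forall a, col_sums_one n (afa_trans M a)) /\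
  col_sums_one n (afa_end M) /\
  fsum n (afa_init M) = 1.

Definition mat_vec (n : nat) (A : nat -> nat -> R) (v : nat -> R) : nat -> R :=
  fun i => fsum n (fun j => A i j * v j).

Definition final_vec {Sigma : Type} {n : nat} (M : AfA Sigma n) (w : list Sigma)
  : nat -> R :=
  mat_vec n (afa_end M)
    (fold_left (fun v a => mat_vec n (afa_trans M a) v) w (afa_init M)).

Definition acc_prob {Sigma : Type} {n : nat} (M : AfA Sigma n) (w : list Sigma) : R :=
  let vf := final_vec M w in
  fsum n (fun j => if afa_acc M j then Rabs (vf j) else 0) /
  fsum n (fun j => Rabs (vf j)).

Definition separates_exactly {Sigma : Type} {n : nat} (M : AfA Sigma n)
  (x y : list Sigma) : Prop :=
  (acc_prob M x = 1 /\ acc_prob M y = 0) \/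
  (acc_prob M x = 0 /\ acc_prob M y = 1).

(** Pick a letter [s] at which the words differ as bit strings ([1] at
    occurrences of [s], [0] elsewhere).  Reading a word as a binary numeral
    with a leading [1] is injective, and the value [r] is computed by the
    one-dimensional affine updates [r |-> 2 r + bit].  An affine map [r |-> α r + β]
    of the line is realised on the two-state vectors [(r, 1 - r)] by a matrix
    whose columns sum to [1]; the end-marker is the affine map sending the value
    of [x] to [1] and that of [y] to [0], so the final vectors are [(1, 0)] and
    [(0, 1)], accepted with probability [1] and [0] by the accepting set [{0}]. *)

From Stdlib Require Import Reals List Lra Lia ClassicalEpsilon FunctionalExtensionality.
Open Scope R_scope.

Definition letter_indicator {Sigma : Type} (s a : Sigma) : bool :=
  if excluded_middle_informative (a = s) then true else false.

Lemma letter_indicator_refl {Sigma : Type} (s : Sigma) : letter_indicator s s = true.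
Proof. unfold letter_indicator; destruct excluded_middle_informative; congruence. Qed.

Lemma letter_indicator_neq {Sigma : Type} (s a : Sigma) :
  a <> s -> letter_indicator s a = false.
Proof. unfold letter_indicator; destruct excluded_middle_informative; congruence. Qed.

Lemma exists_letter_indicator_neq {Sigma : Type} (x y : list Sigma) :
  x <> y -> exists s, map (letter_indicator s) x <> map (letter_indicator s) y.
Proof.
  revert y; induction x as [|a x IHx]; intros [|b y] Hxy.
  - congruence.
  - exists b; discriminate.
  - exists a; discriminate.
  - destruct (excluded_middle_informative (a = b)) as [<-|Hab].
    + assert (Hxy' : x <> y) by congruence.
      destruct (IHx y Hxy') as [s Hs]; exists s; cbn; congruence.
    + exists a; cbn.
      rewrite letter_indicator_refl, letter_indicator_neq by congruence.
      discriminate.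
Qed.

Definition binary_step (m : nat) (b : bool) : nat := (2 * m + Nat.b2n b)%nat.

Definition binary_code (l : list bool) : nat := fold_left binary_step l 1%nat.

(* The same numeral read least significant bit first, i.e. for [rev l]. *)
Definition binary_code_rev (l : list bool) : nat :=
  fold_right (fun b m => binary_step m b) 1%nat l.

Lemma binary_code_rev_cons (b : bool) (l : list bool) :
  binary_code_rev (b :: l) = (2 * binary_code_rev l + Nat.b2n b)%nat.
Proof. reflexivity. Qed.

Lemma binary_code_rev_pos (l : list bool) : (1 <= binary_code_rev l)%nat.
Proof. induction l as [|b l IHl]; [|rewrite binary_code_rev_cons]; cbn; lia. Qed.

Lemma binary_code_rev_inj (l1 l2 : list bool) :
  binary_code_rev l1 = binary_code_rev l2 -> l1 = l2.
Proof.
  revert l2; induction l1 as [|b1 l1 IHl1]; intros [|b2 l2] Heq;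
    rewrite ?binary_code_rev_cons in Heq.
  - reflexivity.
  - pose proof (binary_code_rev_pos l2); destruct b2; cbn in Heq; lia.
  - pose proof (binary_code_rev_pos l1); destruct b1; cbn in Heq; lia.
  - assert (b1 = b2 /\ binary_code_rev l1 = binary_code_rev l2) as [-> Htl]
      by (destruct b1, b2; cbn in Heq; split; easy || lia).
    f_equal; auto.
Qed.

Lemma binary_code_rev_rev (l : list bool) : binary_code l = binary_code_rev (rev l).
Proof. unfold binary_code_rev; now rewrite fold_left_rev_right. Qed.

Lemma binary_code_inj (l1 l2 : list bool) : binary_code l1 = binary_code l2 -> l1 = l2.
Proof.
  rewrite !binary_code_rev_rev; intros Heq.
  now rewrite <- (rev_involutive l1), (binary_code_rev_inj _ _ Heq), rev_involutive.
Qed.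

Lemma fold_left_binary_step_INR {A : Type} (f : A -> bool) (w : list A) (n : nat) :
  fold_left (fun r a => 2 * r + INR (Nat.b2n (f a))) w (INR n) =
  INR (fold_left binary_step (map f w) n).
Proof.
  revert n; induction w as [|a w IHw]; intros n; cbn [fold_left map]; [reflexivity|].
  rewrite <- IHw; f_equal; unfold binary_step.
  rewrite plus_INR, mult_INR; reflexivity.
Qed.

(* The state vector [(r, 1 - r)] represents the point [r]; the matrix
   [[α + β, β], [1 - α - β, 1 - β]] maps it to [(α r + β, 1 - (α r + β))]. *)
Definition line_vec (r : R) (i : nat) : R := match i with O => r | _ => 1 - r end.

Definition affine_mx (alpha beta : R) (i j : nat) : R :=
  match i, j with
  | O, O => alpha + beta
  | O, _ => beta
  | _, O => 1 - alpha - beta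
  | _, _ => 1 - beta
  end.

Lemma col_sums_one_affine_mx (alpha beta : R) : col_sums_one 2 (affine_mx alpha beta).
Proof. intros [|[|j]] Hj; unfold fsum; cbn; lra || lia. Qed.

Lemma fsum_line_vec (r : R) : fsum 2 (line_vec r) = 1.
Proof. unfold fsum; cbn; lra. Qed.

Lemma mat_vec_affine_mx (alpha beta r : R) :
  mat_vec 2 (affine_mx alpha beta) (line_vec r) = line_vec (alpha * r + beta).
Proof.
  apply functional_extensionality; intros [|[|i]]; unfold mat_vec, fsum; cbn; lra.
Qed.

Lemma fold_left_affine_mx {A : Type} (alpha beta : A -> R) (w : list A) (r : R) :
  fold_left (fun v a => mat_vec 2 (affine_mx (alpha a) (beta a)) v) w (line_vec r) =
  line_vec (fold_left (fun r a => alpha a * r + beta a) w r).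
Proof.
  revert r; induction w as [|a w IHw]; intros r; cbn; [reflexivity|].
  now rewrite mat_vec_affine_mx.
Qed.

Lemma acc_prob_line_vec_1 {Sigma : Type} (M : AfA Sigma 2) (w : list Sigma) :
  afa_acc M = (fun j => Nat.eqb j 0) -> final_vec M w = line_vec 1 -> acc_prob M w = 1.
Proof.
  intros Hacc Hfinal; unfold acc_prob; rewrite Hacc, Hfinal; unfold fsum; cbn.
  rewrite Rminus_diag, Rabs_R0, Rabs_R1; field.
Qed.

Lemma acc_prob_line_vec_0 {Sigma : Type} (M : AfA Sigma 2) (w : list Sigma) :
  afa_acc M = (fun j => Nat.eqb j 0) -> final_vec M w = line_vec 0 -> acc_prob M w = 0.
Proof.
  intros Hacc Hfinal; unfold acc_prob; rewrite Hacc, Hfinal; unfold fsum; cbn.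
  rewrite Rminus_0_r, Rabs_R0, Rabs_R1; field.
Qed.

(* Transitions double the binary value and add the bit of the letter; the
   end-marker sends [u] to [1] and [v] to [0]. *)
Definition binary_afa {Sigma : Type} (f : Sigma -> bool) (u v : R) : AfA Sigma 2 :=
  mkAfA Sigma 2 (fun a => affine_mx 2 (INR (Nat.b2n (f a))))
    (affine_mx (/ (u - v)) (- v / (u - v))) (line_vec 1) (fun j => Nat.eqb j 0).

Lemma binary_afa_wf {Sigma : Type} (f : Sigma -> bool) (u v : R) :
  AfA_wf (binary_afa f u v).
Proof.
  split; [|split]; cbn.
  - intros a; apply col_sums_one_affine_mx.
  - apply col_sums_one_affine_mx.
  - apply fsum_line_vec.
Qed.

Lemma final_vec_binary_afa {Sigma : Type} (f : Sigma -> bool) (u v : R) (w : list Sigma) :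
  final_vec (binary_afa f u v) w =
  line_vec ((INR (binary_code (map f w)) - v) / (u - v)).
Proof.
  unfold final_vec; cbn.
  rewrite (fold_left_affine_mx (fun _ => 2)), mat_vec_affine_mx.
  unfold binary_code; rewrite <- fold_left_binary_step_INR.
  f_equal; cbn [INR]; unfold Rdiv; ring.
Qed.

Theorem mainTheorem9 (Sigma : Type) (alphabet : list Sigma)
  (Hfin : forall a : Sigma, In a alphabet) (x y : list Sigma) :
  x <> y ->
  exists M : AfA Sigma 2, AfA_wf M /\ separates_exactly M x y.
Proof.
  intros Hxy.
  destruct (exists_letter_indicator_neq x y Hxy) as [s Hs].
  set (f := letter_indicator s) in Hs.
  set (u := INR (binary_code (map f x))).
  set (v := INR (binary_code (map f y))).
  assert (Huv : u - v <> 0).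
  { intros Heq; apply Hs, binary_code_inj, INR_eq; unfold u, v in Heq; lra. }
  exists (binary_afa f u v); split; [apply binary_afa_wf|left]; split.
  - apply acc_prob_line_vec_1; [reflexivity|].
    rewrite final_vec_binary_afa; fold u; f_equal; now field.
  - apply acc_prob_line_vec_0; [reflexivity|].
    rewrite final_vec_binary_afa; fold v; f_equal; unfold Rdiv; ring.
Qed.
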